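(* Let $\mathfrak a$ be a primary monomial ideal in a polynomial ring $\Bbbk[x_1,\ldots,x_n]$ over a field $\Bbbk$, and let $I'$ be a polarization of $\mathfrak a$. Then the Stanley--Reisner complex of $I'$ is vertex-decomposable.
   Context: A monomial ideal $\mathfrak a$ is primary if $R/\mathfrak a$ has a unique associated prime; equivalently, if $\mathfrak p=\sqrt{\mathfrak a}$ (generated by a subset of the variables) and no minimal monomial generator of $\mathfrak a$ is divisible by a variable not in $\mathfrak p$. A polarization of a monomial ideal $\mathfrak a$ is the squarefree monomial ideal in a polynomial ring with variables $x_{i,j}$ generated by the monomials $\prod_{i=1}^n\prod_{j=1}^{a_i}x_{i,j}$, one for each minimal monomial generator $x_1^{a_1}\cdots x_n^{a_n}$ of $\mathfrak a$. The Stanley--Reisner complex of a squarefree monomial ideal $I$ on vertex set $V$ (the variables) is the simplicial complex of subsets $F\subseteq V$ with $\prod_{x\in F}x\notin I$. For a simplicial complex $\Delta$ on $V$ and $x\in V$: $\operatorname{del}_\Delta(x)=\Delta|_{V\setminus\{x\}}=\{F\in\Delta: x\notin F\}$ and $\operatorname{link}_\Delta(x)=\{F\in\Delta: x\notin F,\ F\cup\{x\}\in\Delta\}$. A $d$-dimensional simplicial complex $\Delta$ is vertex-decomposable if it is pure and either $\Delta$ is a $d$-simplex, or there is a vertex $x$ such that $\operatorname{link}_\Delta(x)$ is $(d-1)$-dimensional and vertex-decomposable and $\operatorname{del}_\Delta(x)$ is $d$-dimensional and vertex-decomposable. *)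

From mathcomp Require Import all_boot.
Set Implicit Arguments. Unset Strict Implicit. Unset Printing Implicit Defensive.

(* A monomial x_1^{a_1} ... x_n^{a_n} of k[x_1,...,x_n], as its exponent vector
   (variables indexed by 'I_n). *)
Definition mon (n : nat) := {ffun 'I_n -> nat}.

Definition mdiv n (u v : mon n) : bool := [forall i, u i <= v i].

Definition mpow n (k : nat) (m : mon n) : mon n := [ffun i => k * m i].

(* A monomial ideal is given by a finite list G of monomial generators;
   a monomial m lies in the ideal <G> iff some generator divides it. *)
Definition inI n (G : seq (mon n)) (m : mon n) : bool := has (fun g => mdiv g m) G.

(* m is a minimal monomial generator of <G>: m in <G>, and every monomial of <G>
   dividing m equals m (it suffices to test the generators). *)
Definition is_mingen n (G : seq (mon n)) (m : mon n) : bool :=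
  inI G m && all (fun g => mdiv g m ==> (g == m)) G.

Definition mingens n (G : seq (mon n)) : seq (mon n) := undup (filter (is_mingen G) G).

Definition inRad n (G : seq (mon n)) (m : mon n) : Prop := exists k, inI G (mpow k m).

(* monomials of the prime ideal generated by the variables x_i, i in S *)
Definition inVarIdeal n (S : {set 'I_n}) (m : mon n) : bool := [exists i in S, 0 < m i].

(* Primary monomial ideal (as in the paper): sqrt(<G>) = p is generated by a subset S
   of the variables, and no minimal generator is divisible by a variable not in p.
   (Monomial ideals are equal iff they contain the same monomials.) *)
Definition primary_mon n (G : seq (mon n)) : Prop :=
  exists S : {set 'I_n},
    (forall m, inRad G m <-> inVarIdeal S m) /\
    (forall g, g \in mingens G -> forall i, i \notin S -> g i = 0).

(* bound on all exponents, used to build a finite type of variables x_{i,j} *)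
Definition polK n (G : seq (mon n)) : nat := (\max_(g <- G) \max_(i < n) g i).+1.

(* variables x_{i,j} are encoded as (i, j) with j 0-based (x_{i,j+1} in the paper) *)
Definition pvar n (G : seq (mon n)) := ('I_n * 'I_(polK G))%type.

Definition maxexp n (G : seq (mon n)) (i : 'I_n) : nat := \max_(g <- mingens G) g i.

Definition pvertices n (G : seq (mon n)) : {set pvar G} :=
  [set v : pvar G | v.2 < maxexp G v.1].

(* support of the polarization prod_i prod_{j <= a_i} x_{i,j} of a monomial *)
Definition polmon n (G : seq (mon n)) (g : mon n) : {set pvar G} :=
  [set v : pvar G | v.2 < g v.1].

(* squarefree monomial prod_{x in F} x lies in the polarization I' of <G> *)
Definition in_polarization n (G : seq (mon n)) (F : {set pvar G}) : bool :=
  has (fun g => @polmon n G g \subset F) (mingens G).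

Definition SR_polarization n (G : seq (mon n)) : {set {set pvar G}} :=
  [set F : {set pvar G} | (F \subset @pvertices n G) && ~~ @in_polarization n G F].

Section SC.
Variable T : finType.

Definition facets (D : {set {set T}}) : {set {set T}} :=
  [set F in D | [forall H in D, (F \subset H) ==> (H == F)]].

(* D is pure of dimension r-1 (all facets have r vertices), D nonempty *)
Definition pure_rank (D : {set {set T}}) (r : nat) : bool :=
  (D != set0) && [forall F in facets D, #|F| == r].

Definition sc_del (D : {set {set T}}) (x : T) : {set {set T}} :=
  [set F in D | x \notin F].

Definition sc_link (D : {set {set T}}) (x : T) : {set {set T}} :=
  [set F in D | (x \notin F) && (x |: F \in D)].

(* VD r D : D is an (r-1)-dimensional vertex-decomposable complex *)
Inductive VD : nat -> {set {set T}} -> Prop :=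
| VD_simplex (r : nat) (D : {set {set T}}) (F : {set T}) :
    D = powerset F -> #|F| = r -> VD r D
| VD_step (r : nat) (D : {set {set T}}) (x : T) :
    pure_rank D r.+1 -> VD r (sc_link D x) -> VD r.+1 (sc_del D x) -> VD r.+1 D.

Definition vertex_decomposable (D : {set {set T}}) : Prop := exists r, VD r D.
End SC.

(* A set F of polarization variables x_(i,j) is a face iff the monomial whose
   exponent of x_i is the length of the initial run x_(i,1), ..., x_(i,c_i) of F
   lies outside the ideal. We generalise to windows [lo_i, hi_i) of each row and
   an arbitrary down-closed family A of exponent vectors in which some power of
   every relevant variable is missing (primariness). For the bottom vertex v of a
   nonempty row i, del(v) is again such a complex (drop the bottom of row i and
   ignore x_i) and so is link(v) (drop the bottom of row i and multiply by x_i),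
   each with smaller total window length; induction gives vertex decomposability.
   Purity holds because removing the first gap of each relevant row from the
   vertex set gives a facet containing any given face. *)

From mathcomp Require Import all_boot zify boolp.
Set Implicit Arguments. Unset Strict Implicit. Unset Printing Implicit Defensive.

Section PrefixComplex.
Variables (n K : nat).
Local Notation vertex := ('I_n * 'I_K)%type.
Implicit Types (lo hi c d : 'I_n -> nat) (A : ('I_n -> nat) -> Prop).
Implicit Types (B : {set 'I_n}) (F : {set vertex}) (u v w : vertex).

Definition window lo hi : {set vertex} := [set v : vertex | lo v.1 <= v.2 < hi v.1].

Definition covers lo F c : Prop := forall (i : 'I_n) (j : nat), lo i <= j < lo i + c i ->
  exists2 v, v \in F & v.1 = i /\ nat_of_ord v.2 = j.

(* For down-closed [A], [F] is a face iff the vector of lengths of its initial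
   runs, counted from [lo] in each row, lies in [A]. *)
Definition prefix_complex lo hi A : {set {set vertex}} :=
  [set F : {set vertex} | (F \subset window lo hi) && `[< forall c, covers lo F c -> A c >]].

Definition down_closed A := forall c d, (forall k, c k <= d k) -> A d -> A c.

(* [A] only depends on the exponents of the variables in [B], and
   [family_bounded] is primariness: some power of each of them is excluded. *)
Record primary_family lo hi A B : Prop := PrimaryFamily {
  lo_le_hi : forall i, lo i <= hi i;
  hi_le_K : forall i, hi i <= K;
  family0 : A (fun _ => 0);
  family_down : down_closed A;
  family_local : forall c d, {in B, c =1 d} -> A c -> A d;
  family_bounded : forall c k, k \in B -> A c -> c k < hi k - lo k }.

Definition active lo hi B := [set i in B | lo i < hi i].

Definition family_rank lo hi B := #|window lo hi| - #|active lo hi B|.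

Lemma in_prefix_complex lo hi A F :
  F \in prefix_complex lo hi A <-> F \subset window lo hi /\ forall c, covers lo F c -> A c.
Proof. by rewrite inE; split => [/andP [-> /asboolP]|[-> /asboolP]]. Qed.

Lemma vertex_eq u w : u.1 = w.1 -> nat_of_ord u.2 = w.2 -> u = w.
Proof. by case: u w => [a b] [c e] /= -> h; congr pair; exact: val_inj. Qed.

Lemma covers_width lo hi F c : (forall i, lo i <= hi i) -> F \subset window lo hi ->
  covers lo F c -> forall k, c k <= hi k - lo k.
Proof.
move=> lohi /subsetP sub cov k; rewrite leqNgt; apply/negP => lt.
have [v /sub] := cov k (hi k) ltac:(have := lohi k; lia).
by rewrite inE => /[swap] -[-> ->]; rewrite ltnn andbF.
Qed.

Lemma covers_gap lo F c v : nat_of_ord v.2 = lo v.1 -> v \notin F -> covers lo F c -> c v.1 = 0.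
Proof.
move=> hv vF cov; apply/eqP; rewrite -leqn0 leqNgt; apply/negP => lt.
have [u uF [u1 u2]] := cov v.1 (lo v.1) ltac:(lia).
by move: vF; rewrite -(@vertex_eq u v) ?uF ?u1 ?u2.
Qed.

Lemma window_shift lo hi v : nat_of_ord v.2 = lo v.1 ->
  window [eta lo with v.1 |-> (lo v.1).+1] hi = window lo hi :\ v.
Proof.
move=> hv; apply/setP => u; rewrite !inE /=.
have [e|ne] := eqVneq u.1 v.1; last first.
  by have -> : (u == v) = false by apply: contraNF ne => /eqP ->.
have -> : (u == v) = (nat_of_ord u.2 == lo v.1).
  by apply/eqP/eqP => [-> //|h]; apply: vertex_eq; rewrite ?h.
by rewrite e; case: ltngtP.
Qed.

Lemma sc_del_prefix_complex lo hi A v : down_closed A -> nat_of_ord v.2 = lo v.1 ->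
  sc_del (prefix_complex lo hi A) v =
  prefix_complex [eta lo with v.1 |-> (lo v.1).+1] hi (fun c => A [eta c with v.1 |-> 0]).
Proof.
move=> downA hv; apply/setP => F; rewrite /sc_del inE.
apply/idP/idP => [/andP [/in_prefix_complex [sub faceF] vF]|/in_prefix_complex []].
  apply/in_prefix_complex; rewrite window_shift //.
  split => [|c cov]; first by apply/subsetD1P.
  apply: faceF => k j; have [->|ne] := eqVneq k v.1; first by rewrite /= eqxx; lia.
  by move: (cov k j) => /=; rewrite (negbTE ne).
rewrite window_shift // => /subsetD1P [sub vF] faceF.
rewrite vF andbT; apply/in_prefix_complex; split => // c cov.
have c0 := covers_gap hv vF cov.
apply: (downA _ [eta c with v.1 |-> 0]) => [k|] /=; first by case: eqP => [->|]; rewrite ?c0.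
apply: faceF => k j /=; case: eqP => [-> | /eqP ne]; first lia.
exact: cov.
Qed.

Lemma sc_link_prefix_complex lo hi A v : down_closed A -> nat_of_ord v.2 = lo v.1 ->
  lo v.1 < hi v.1 ->
  sc_link (prefix_complex lo hi A) v =
  prefix_complex [eta lo with v.1 |-> (lo v.1).+1] hi (fun c => A [eta c with v.1 |-> (c v.1).+1]).
Proof.
move=> downA hv vwin; set i := v.1; apply/setP => F; rewrite /sc_link inE.
apply/idP/idP => [/and3P [_ vF /in_prefix_complex [subvF facevF]]|/in_prefix_complex []].
  apply/in_prefix_complex; rewrite window_shift //; split => [|c cov].
    by apply/subsetD1P; split=> //; apply: subset_trans subvF; apply: subsetUr.
  apply: facevF => k j; have [-> /=|ne] := eqVneq k i; rewrite /= ?eqxx.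
    have [-> _|ne range] := eqVneq j (lo i); first by exists v; rewrite ?setU11.
    have [u uF urow] := cov i j ltac:(rewrite /= eqxx; move/eqP: ne; lia).
    by exists u; rewrite ?setU1r.
  rewrite (negbTE ne) => range; have [u uF urow] := cov k j ltac:(by rewrite /= (negbTE ne)).
  by exists u; rewrite ?setU1r.
rewrite window_shift // => /subsetD1P [sub vF] faceF.
have FD : F \in prefix_complex lo hi A.
  apply/in_prefix_complex; split => // c cov; have c0 := covers_gap hv vF cov.
  apply: (downA _ _ _ (faceF c _)) => [k|k j] /=; first by case: eqP => [->|].
  by case: eqP => [-> | /eqP ne]; [rewrite c0; lia | exact: cov].
rewrite FD vF; apply/in_prefix_complex; split => [|c cov].
  by rewrite subUset sub1set inE hv leqnn vwin sub.
apply: (downA _ _ _ (faceF [eta c with i |-> (c i).-1] _)) => [k|k j] /=.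
  by case: eqP => [->|]; [rewrite eqxx; lia | ].
case: eqP => [-> | /eqP ne] range.
  have [u] := cov i j ltac:(lia); rewrite in_setU1 => /orP [/eqP -> [_ /=]|uF urow].
    by rewrite hv -/i; lia.
  by exists u.
have [u] := cov k j range; rewrite in_setU1 => /orP [/eqP -> [/= ki]|uF urow].
  by move: ne; rewrite -ki eqxx.
by exists u.
Qed.

Lemma sc_del_prefix_complex_nonvertex lo hi A v : nat_of_ord v.2 = lo v.1 ->
  ~ A [eta (fun _ => 0) with v.1 |-> 1] ->
  sc_del (prefix_complex lo hi A) v = prefix_complex lo hi A.
Proof.
move=> hv notA; apply/setP => F; rewrite /sc_del inE andb_idr // => /in_prefix_complex [_ faceF].
apply: contra_notN notA => vF; apply: faceF => k j /=.
by case: eqP => [-> | _] range; [exists v => //; split => //; rewrite hv; lia | lia].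
Qed.

Section Facets.
Variables (lo hi : 'I_n -> nat) (A : ('I_n -> nat) -> Prop) (B : {set 'I_n}).
Hypothesis famA : primary_family lo hi A B.
Local Notation D := (prefix_complex lo hi A).

(* Removing from the window the lowest missing vertex of each row of [B]
   yields a facet containing [F]. *)
Definition first_gaps F : {set vertex} :=
  [set u in window lo hi :\: F | (u.1 \in B) &&
     [forall w in window lo hi :\: F, (w.1 == u.1) ==> (u.2 <= w.2)]].

Lemma first_gapsP F u : u \in first_gaps F ->
  [/\ u \in window lo hi :\: F, u.1 \in B &
     forall w, w \in window lo hi :\: F -> w.1 = u.1 -> u.2 <= w.2].
Proof.
rewrite inE => /and3P [uX uB /forallP lowest]; split => // w wX e.
by move: (lowest w); rewrite wX e eqxx.
Qed.

Lemma first_gaps_below F u : u \in window lo hi :\: F -> u.1 \in B ->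
  exists2 w, w \in first_gaps F & w.1 = u.1 /\ w.2 <= u.2.
Proof.
move=> uX uB; pose row := [pred w : vertex | (w \in window lo hi :\: F) && (w.1 == u.1)].
have urow : row u by rewrite /= uX eqxx.
have [w /andP [wX /eqP w1] wmin] := arg_minnP (fun w : vertex => nat_of_ord w.2) urow.
exists w; last by split => //; apply: wmin.
rewrite inE wX w1 uB; apply/forallP => w'; apply/implyP => w'X; apply/implyP => /eqP e.
by apply: wmin; rewrite /= w'X e eqxx.
Qed.

Lemma first_gaps_inj F : {in first_gaps F &, injective fst}.
Proof.
move=> u w /first_gapsP [uX _ ulow] /first_gapsP [wX _ wlow] e.
by apply: vertex_eq => //; apply/eqP; rewrite eqn_leq ulow ?wlow.
Qed.

Lemma face_row_gap F i : F \in D -> i \in active lo hi B ->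
  exists2 u, u \in window lo hi :\: F & u.1 = i.
Proof.
move=> /in_prefix_complex [sub faceF]; rewrite inE => /andP [iB iwin].
case: (pickP [pred u in window lo hi :\: F | u.1 == i]) => [u /andP [uX /eqP <-]|none].
  by exists u.
suff /(family_bounded famA iB) : A [eta (fun _ => 0) with i |-> hi i - lo i] by rewrite /= eqxx ltnn.
apply: faceF => k j /=; case: eqP => [-> | _] range; last lia.
have jK : j < K by have := hi_le_K famA i; lia.
exists (i, Ordinal jK) => //; move: (none (i, Ordinal jK)) => /=.
by rewrite eqxx andbT !inE /=; case: (_ \in F) => //; lia.
Qed.

Lemma first_gaps_rows F : F \in D -> fst @: first_gaps F = active lo hi B.
Proof.
move=> FD; apply/setP => i; apply/imsetP/idP => [[u /first_gapsP [uX uB _] ->]|iB].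
  by move: uX; rewrite !inE uB => /and3P [_ lou uhi] /=; lia.
have [u uX ui] := face_row_gap FD iB; subst i.
have uB : u.1 \in B by move: iB; rewrite inE => /andP [].
have [w w_gap [w1 _]] := first_gaps_below uX uB.
by exists w; rewrite ?w1.
Qed.

Lemma card_first_gaps F : F \in D -> #|first_gaps F| = #|active lo hi B|.
Proof. by move=> FD; rewrite -(first_gaps_rows FD) card_in_imset //; apply: first_gaps_inj. Qed.

(* In each row of [B] the facet has the same initial run as [F]; the other rows
   do not matter by [family_local]. *)
Lemma first_gaps_facet F : F \in D -> window lo hi :\: first_gaps F \in D.
Proof.
move=> /[dup] FD /in_prefix_complex [sub faceF].
apply/in_prefix_complex; split => [|c cov]; first exact: subsetDl.
apply: (family_local famA (c := fun k => if k \in B then c k else 0)) => [k -> //|].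
apply: faceF => k j; case kB : (k \in B) => range; last lia.
have [u uG [u1 u2]] := cov k j range; exists u => //.
apply: contraT => uF.
have uX : u \in window lo hi :\: F by rewrite inE uF; move: uG; rewrite inE => /andP [].
have [w w_gap [w1 w2]] := first_gaps_below uX (etrans (congr1 _ u1) kB).
have [wX _ _] := first_gapsP w_gap.
have wrange : lo k <= w.2 < lo k + c k.
  move: wX; rewrite !inE w1 u1 => /and3P [_ -> _] /=.
  by apply: leq_ltn_trans w2 _; rewrite u2; case/andP: range.
have [w' w'G [w'1 w'2]] := cov k w.2 wrange.
by move: w'G; rewrite (@vertex_eq w' w) ?w'1 ?w1 // inE w_gap.
Qed.

Lemma face_extends F : F \in D ->
  exists2 G, G \in D & F \subset G /\ #|G| = family_rank lo hi B.
Proof.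
move=> FD; exists (window lo hi :\: first_gaps F); first exact: first_gaps_facet.
have /in_prefix_complex [sub _] := FD; split.
  apply/subsetP => u uF; rewrite inE (subsetP sub u uF) andbT.
  by apply: contraL uF => /first_gapsP [+ _ _]; rewrite inE => /andP [].
rewrite cardsD /family_rank -(card_first_gaps FD) (setIidPr _) //.
by apply/subsetP => u /first_gapsP [+ _ _]; rewrite inE => /andP [].
Qed.

Lemma pure_prefix_complex : pure_rank D (family_rank lo hi B).
Proof.
apply/andP; split.
  apply/set0Pn; exists set0; apply/in_prefix_complex; split => [|c cov]; first exact: sub0set.
  apply: (family_down famA _ (family0 famA)) => k; rewrite leqNgt; apply/negP => ck.
  by have [u] := cov k (lo k) ltac:(lia); rewrite inE.
apply/forallP => F; apply/implyP; rewrite inE => /andP [FD /forallP maxF].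
have [G GD [FG <-]] := face_extends FD.
by move: (maxF G); rewrite GD FG => /eqP ->.
Qed.

End Facets.

Lemma primary_family_del lo hi A B i : primary_family lo hi A B -> lo i < hi i ->
  primary_family [eta lo with i |-> (lo i).+1] hi (fun c => A [eta c with i |-> 0]) (B :\ i).
Proof.
move=> famA iwin; split => [k|k||c d cd|c d cd|c k] /=.
- by case: eqP => [->|_]; [exact: iwin | exact: lo_le_hi famA k].
- exact: hi_le_K famA k.
- by apply: family_down famA _ _ _ (family0 famA) => k /=; case: eqP.
- by apply: (family_down famA) => k /=; case: eqP => // _; exact: cd.
- apply: (family_local famA) => k kB /=; case: eqP => // /eqP ki.
  by apply: cd; rewrite !inE ki.
- rewrite !inE => /andP [/negbTE ki kB] /(family_bounded famA kB).
  by rewrite /= ki.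
Qed.

Lemma primary_family_link lo hi A B i : primary_family lo hi A B -> i \in B ->
  A [eta (fun _ => 0) with i |-> 1] ->
  primary_family [eta lo with i |-> (lo i).+1] hi (fun c => A [eta c with i |-> (c i).+1]) B.
Proof.
move=> famA iB Ai; have := family_bounded famA iB Ai; rewrite /= eqxx => iwin.
split => [k|k||c d cd|c d cd|c k kB] //=.
- by case: eqP => [->|_]; [lia | exact: lo_le_hi famA k].
- exact: hi_le_K famA k.
- by apply: (family_down famA) => k /=; case: eqP => _; [have := cd i | exact: cd].
- by apply: (family_local famA) => k kB /=; case: eqP => _; rewrite cd.
- move/(family_bounded famA kB); rewrite /=.
  by case: eqP => [->|]; lia.
Qed.

Lemma VD_window_simplex lo hi A B : primary_family lo hi A B -> active lo hi B = set0 ->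
  VD (family_rank lo hi B) (prefix_complex lo hi A).
Proof.
move=> famA noactive; apply: (VD_simplex (F := window lo hi)).
  apply/setP => F; rewrite powersetE; apply/idP/idP => [/in_prefix_complex [] //|sub].
  apply/in_prefix_complex; split => // c cov.
  apply: (family_local famA (c := fun _ => 0)); last exact: family0 famA.
  move=> k kB; have := covers_width (lo_le_hi famA) sub cov k.
  have : k \notin active lo hi B by rewrite noactive inE.
  by rewrite inE kB /= -leqNgt; lia.
by rewrite /family_rank noactive cards0 subn0.
Qed.

Definition window_measure lo hi B := \sum_(k in B) (hi k - lo k).

Lemma window_measure_setD1 lo hi B i : i \in B ->
  window_measure lo hi B = (hi i - lo i) + window_measure lo hi (B :\ i).
Proof. by move=> iB; rewrite /window_measure (big_setD1 _ iB). Qed.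

Lemma window_measure_update lo hi B i x :
  window_measure [eta lo with i |-> x] hi (B :\ i) = window_measure lo hi (B :\ i).
Proof. by apply: eq_bigr => k; rewrite !inE /= => /andP [/negbTE ->]. Qed.

Lemma window_measure_del_lt lo hi B i x : i \in active lo hi B ->
  window_measure [eta lo with i |-> x] hi (B :\ i) < window_measure lo hi B.
Proof.
rewrite inE => /andP [iB iwin].
by rewrite window_measure_update (window_measure_setD1 _ _ iB) -[X in X < _]add0n ltn_add2r subn_gt0.
Qed.

Lemma window_measure_raise_lt lo hi B i : i \in active lo hi B ->
  window_measure [eta lo with i |-> (lo i).+1] hi B < window_measure lo hi B.
Proof.
rewrite inE => /andP [iB iwin].
rewrite !(window_measure_setD1 _ _ iB) window_measure_update /= eqxx.
by rewrite ltn_add2r subnS ltn_predL subn_gt0.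
Qed.

Lemma active_del lo hi B i x : active [eta lo with i |-> x] hi (B :\ i) = active lo hi B :\ i.
Proof. by apply/setP => k; rewrite !inE /=; case: eqP. Qed.

Lemma family_rank_del lo hi B v : nat_of_ord v.2 = lo v.1 -> v.1 \in active lo hi B ->
  family_rank [eta lo with v.1 |-> (lo v.1).+1] hi (B :\ v.1) = family_rank lo hi B.
Proof.
move=> hv vact; have vwin : v \in window lo hi.
  by move: vact; rewrite !inE hv leqnn => /andP [].
rewrite /family_rank window_shift // active_del (cardsD1 v (window lo hi)).
by rewrite (cardsD1 v.1 (active lo hi B)) vwin vact subnDl.
Qed.

Lemma family_rank_raise lo hi B v : nat_of_ord v.2 = lo v.1 -> v.1 \in active lo hi B ->
  (lo v.1).+1 < hi v.1 ->
  family_rank [eta lo with v.1 |-> (lo v.1).+1] hi B = (family_rank lo hi B).-1.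
Proof.
move=> hv vact vwin2; have vwin : v \in window lo hi.
  by move: vact; rewrite !inE hv leqnn => /andP [].
rewrite /family_rank window_shift //.
have -> : active [eta lo with v.1 |-> (lo v.1).+1] hi B = active lo hi B.
  by apply/setP => k; rewrite !inE /=; case: eqP => [->|//]; rewrite vwin2 ltnW.
by rewrite (cardsD1 v (window lo hi)) vwin add1n subSKn.
Qed.

Lemma bottom_vertex_face lo hi A v : down_closed A -> nat_of_ord v.2 = lo v.1 ->
  v \in window lo hi -> A [eta (fun _ => 0) with v.1 |-> 1] -> [set v] \in prefix_complex lo hi A.
Proof.
move=> downA hv vwin Av; apply/in_prefix_complex; split => [|c cov]; first by rewrite sub1set.
apply: (downA _ _ _ Av) => k /=; case: eqP => [->|ne]; rewrite leqNgt; apply/negP => ck.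
  have [u] := cov v.1 (lo v.1).+1 ltac:(lia).
  by rewrite inE => /eqP -> [_]; rewrite hv; lia.
have [u] := cov k (lo k) ltac:(lia).
by rewrite inE => /eqP -> [vk _]; exact: ne (esym vk).
Qed.

Lemma VD_prefix_complex_shed lo hi A B v : primary_family lo hi A B ->
  nat_of_ord v.2 = lo v.1 -> v \in window lo hi -> A [eta (fun _ => 0) with v.1 |-> 1] ->
  VD (family_rank lo hi B).-1 (sc_link (prefix_complex lo hi A) v) ->
  VD (family_rank lo hi B) (sc_del (prefix_complex lo hi A) v) ->
  VD (family_rank lo hi B) (prefix_complex lo hi A).
Proof.
move=> famA hv vwin Av VDlink VDdel.
have [G _ [vG Gcard]] := face_extends famA (bottom_vertex_face (family_down famA) hv vwin Av).
have rank_gt0 : 0 < family_rank lo hi B.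
  by rewrite -Gcard; apply/card_gt0P; exists v; rewrite (subsetP vG) ?set11.
rewrite -(prednK rank_gt0) in VDdel *; apply: (VD_step _ VDlink VDdel).
by rewrite prednK //; exact: pure_prefix_complex famA.
Qed.

Theorem VD_prefix_complex lo hi A B : primary_family lo hi A B ->
  VD (family_rank lo hi B) (prefix_complex lo hi A).
Proof.
move=> famA; have [m] := ubnP (window_measure lo hi B).
elim: m lo hi A B famA => // m IH lo hi A B famA; rewrite ltnS => lt_m.
have [noact|[i iact]] := set_0Vmem (active lo hi B); first exact: VD_window_simplex.
have [iB iwin] : i \in B /\ lo i < hi i by apply/andP; move: iact; rewrite inE.
have iK : lo i < K by have := hi_le_K famA i; lia.
pose v : vertex := (i, Ordinal iK); have hv : nat_of_ord v.2 = lo v.1 by [].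
have VDdel : VD (family_rank lo hi B) (sc_del (prefix_complex lo hi A) v).
  rewrite (sc_del_prefix_complex _ (family_down famA) hv) -(family_rank_del hv iact).
  apply: IH; first exact: primary_family_del.
  exact: leq_trans (window_measure_del_lt _ iact) lt_m.
have [Ai|notAi] := pselect (A [eta (fun _ => 0) with i |-> 1]); last first.
  by rewrite -(sc_del_prefix_complex_nonvertex _ hv notAi).
have vwin : v \in window lo hi by rewrite inE hv leqnn iwin.
apply: (VD_prefix_complex_shed famA hv vwin Ai _ VDdel).
have iwin2 : (lo i).+1 < hi i by have := family_bounded famA iB Ai; rewrite /= eqxx; lia.
rewrite (sc_link_prefix_complex (family_down famA) hv iwin) -(family_rank_raise hv iact iwin2).
apply: IH; first exact: primary_family_link.
exact: leq_trans (window_measure_raise_lt iact) lt_m.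
Qed.

End PrefixComplex.

Lemma mdiv_sum_ltn n (g h : mon n) : mdiv g h -> g != h -> \sum_i g i < \sum_i h i.
Proof.
move=> /forallP gh ne.
have [i gi] : exists i, g i < h i.
  apply/existsP; apply: contraR ne; rewrite negb_exists => /forallP hg.
  by apply/eqP/ffunP => i; apply/anti_leq; rewrite gh leqNgt hg.
rewrite (bigD1 i) //= [X in _ < X](bigD1 i) //= -addSn.
by apply: leq_add => //; apply: leq_sum => j _; apply: gh.
Qed.

Lemma mem_mingens n (G : seq (mon n)) g : (g \in mingens G) = is_mingen G g && (g \in G).
Proof. by rewrite /mingens mem_undup mem_filter. Qed.

Lemma mingens_subset n (G : seq (mon n)) : {subset mingens G <= G}.
Proof. by move=> g; rewrite mem_mingens => /andP []. Qed.

Lemma mingens_mdiv n (G : seq (mon n)) h : h \in G -> exists2 g, g \in mingens G & mdiv g h.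
Proof.
have [m] := ubnP (\sum_i h i); elim: m h => // m IH h; rewrite ltnS => hm hG.
have mdiv_refl : mdiv h h by apply/forallP.
case mh : (is_mingen G h); first by exists h; rewrite // mem_mingens mh.
have hI : inI G h by apply/hasP; exists h.
move: mh; rewrite /is_mingen hI /=.
move/negbT/allPn => [g gG]; rewrite negb_imply => /andP [gh ne].
have [g' g'min g'g] := IH g (leq_trans (mdiv_sum_ltn gh ne) hm) gG.
exists g' => //; apply/forallP => i.
exact: leq_trans (forallP g'g i) (forallP gh i).
Qed.

Lemma polK_gt n (G : seq (mon n)) g i : g \in G -> g i < polK G.
Proof.
move=> gG; rewrite ltnS; apply: leq_trans (leq_bigmax i) _.
exact: leq_bigmax_seq gG _.
Qed.

Lemma maxexp_ge n (G : seq (mon n)) g i : g \in mingens G -> g i <= maxexp G i.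
Proof. by move=> gmin; apply: leq_bigmax_seq gmin _. Qed.

Lemma maxexp_lt_polK n (G : seq (mon n)) i : maxexp G i < polK G.
Proof.
rewrite ltnS; apply/bigmax_leqP_seq => g gmin _.
by rewrite -ltnS; apply/polK_gt/mingens_subset.
Qed.

Definition mon_notin n (G : seq (mon n)) (c : 'I_n -> nat) : Prop :=
  ~~ has (fun g : mon n => [forall i, g i <= c i]) (mingens G).

Lemma SR_polarization_prefix_complex n (G : seq (mon n)) :
  SR_polarization G = prefix_complex (polK G) (fun _ => 0) (maxexp G) (mon_notin G).
Proof.
apply/setP => F; rewrite !inE.
have -> : pvertices G = window (polK G) (fun _ => 0) (maxexp G) by apply/setP => v; rewrite !inE.
congr (_ && _); apply/idP/asboolP => [notinF c cov|faceF].
  apply/hasP => -[g gmin /forallP gc]; apply: (negP notinF); apply/hasP; exists g => //.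
  apply/subsetP => v; rewrite inE => vg.
  have [u uF [u1 u2]] := cov v.1 v.2 ltac:(by rewrite /= add0n (leq_trans vg)).
  by rewrite -(vertex_eq u1 u2).
apply/hasP => -[g gmin /subsetP gF].
have gG := mingens_subset gmin.
suff /hasP : mon_notin G g by apply; exists g => //; apply/forallP.
apply: faceF => i j; rewrite add0n => /andP [_ jg].
have jK : j < polK G := ltn_trans jg (polK_gt i gG).
by exists (i, Ordinal jK) => //; apply: gF; rewrite inE.
Qed.

(* Primariness makes every variable that occurs in a minimal generator
   radical, hence some power of it is divisible by a minimal generator. *)
Lemma primary_mingens_pure_power n (G : seq (mon n)) k : primary_mon G -> 0 < maxexp G k ->
  exists2 g, g \in mingens G & forall j, j != k -> g j = 0.
Proof.
move=> [S [radS mingensS]] kpos.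
have [g0 g0min g0k] : exists2 g0, g0 \in mingens G & 0 < g0 k.
  apply/hasP; apply: contraLR kpos => /hasPn g0k; rewrite -leqNgt leqn0 eqn_leq leq0n andbT.
  by apply/bigmax_leqP_seq => g gmin _; rewrite leqNgt g0k.
have kS : k \in S by apply: contraLR g0k => kS; rewrite mingensS.
have [p /hasP [h hG /forallP hp]] : inRad G [ffun j => nat_of_bool (j == k)].
  by apply/radS/existsP; exists k; rewrite kS ffunE eqxx.
have [g gmin /forallP gh] := mingens_mdiv hG.
exists g => // j jk; apply/eqP; rewrite -leqn0.
by have := leq_trans (gh j) (hp j); rewrite !ffunE (negbTE jk) muln0.
Qed.

Lemma primary_polarization_family n (G : seq (mon n)) : primary_mon G ->
  primary_family (polK G) (fun _ => 0) (maxexp G) (mon_notin G) [set i | 0 < maxexp G i].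
Proof.
move=> /[dup] primG [S [radS _]]; split => // [i|||c d cd|c k].
- exact: ltnW (maxexp_lt_polK G i).
- apply/hasP => -[g gmin /forallP g0].
  have : inRad G [ffun => 0].
    exists 1; apply/hasP; exists g; first exact: mingens_subset.
    by apply/forallP => i; rewrite !ffunE; apply: g0.
  by move/radS/existsP => [i]; rewrite ffunE andbF.
- move=> c d cd; apply: contra => /hasP [g gmin /forallP gd]; apply/hasP; exists g => //.
  by apply/forallP => k; apply: leq_trans (gd k) (cd k).
- apply: contra => /hasP [g gmin /forallP gc]; apply/hasP; exists g => //.
  apply/forallP => k; have [kB|] := boolP (k \in [set i | 0 < maxexp G i]).
    by rewrite (cd k kB).
  rewrite inE -leqNgt leqn0 => /eqP mk0.
  by have := maxexp_ge k gmin; rewrite mk0 leqn0 => /eqP ->.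
- rewrite inE subn0 => kpos; apply: contraTT; rewrite -leqNgt => mck.
  have [g gmin gk] := primary_mingens_pure_power primG kpos.
  rewrite /mon_notin negbK; apply/hasP; exists g => //; apply/forallP => j.
  by have [->|/gk ->] := eqVneq j k; [exact: leq_trans (maxexp_ge k gmin) mck | ].
Qed.

Theorem proposition3p4 (n : nat) (G : seq (mon n)) :
  primary_mon G -> vertex_decomposable (SR_polarization G).
Proof.
move=> primG; rewrite SR_polarization_prefix_complex; eexists.
exact: VD_prefix_complex (primary_polarization_family primG).
Qed.
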